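(* Let $L:\mathcal{S}\times\{0,1\}\to[0,1]$ be a Lyapunov function with respect to some stochastic Markov policy $\pi_s$ (so the constraint sets below are nonempty). Define the operator $$(\mathcal{T}_{\mathrm{exp}}V)(s,x)=\max_{\pi(\cdot\mid s,x)}\big\{(\mathcal{T}_d^{\pi}V)(s,x)\ :\ (\mathcal{T}_d^{\pi}L)(s,x)\le L(s,x)\big\},$$ where the maximum is over probability distributions $\pi(\cdot\mid s,x)$ on $\mathcal{A}$. Then $\mathcal{T}_{\mathrm{exp}}$ has a unique fixed point $V_{\mathrm{exp}}$, value iteration $V\mapsto\mathcal{T}_{\mathrm{exp}}V$ converges to it, and a policy $\pi_e$ attaining the maximum in $(\mathcal{T}_{\mathrm{exp}}V_{\mathrm{exp}})(s,x)$ at every $(s,x)$ satisfies $V^{\pi_e}=V_{\mathrm{exp}}$ and is an optimal solution of $$\max_{\pi}\ V^{\pi}(s_0,1)\quad\text{s.t.}\quad(\mathcal{T}_d^{\pi}L)(s,x)\le L(s,x)\ \ \forall (s,x)\in\mathcal{S}\times\{0,1\},$$ for the initial state $s_0$; in particular $V_{\mathrm{exp}}$ is the probability of unsafety under such a policy.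
   Context: Consider a Markov decision process with finite state set $\mathcal{S}$, finite action set $\mathcal{A}$ and transition probabilities $p(s'\mid s,a)$. A target (unsafe) set $\mathcal{G}\subseteq\mathcal{S}$ and a set of terminal states $\mathcal{S}_{\mathrm{term}}\subseteq\mathcal{S}$ are given, and $\mathcal{S}'=\mathcal{S}\setminus\mathcal{S}_{\mathrm{term}}$. The process is augmented with a variable $x_t\in\{0,1\}$ defined by $x_{t+1}=x_t\mathbf{1}_{\mathcal{G}^c}(s_t)$, so $(s_t,x_t)$ is Markov. A (stochastic Markov) policy $\pi$ gives probabilities $\pi(a\mid s,x)$. Let $T^*$ be the first time $t$ with $s_t\in\mathcal{S}_{\mathrm{term}}$. Standing assumption: there is an integer $m$ such that, for every policy and every initial state, $\mathcal{S}_{\mathrm{term}}$ is reached within $m$ steps with positive probability. The stage cost is $d(s,x)=x\,\mathbf{1}_{\mathcal{G}}(s)$ and $V^\pi(s,x)=\mathbb{E}^\pi\big[\sum_{t=0}^{T^*-1}d(s_t,x_t)\mid (s_0,x_0)=(s,x)\big]$ (probability of unsafety when $x=1$). The Bellman operator $\mathcal{T}_d^\pi$ acts on $V:\mathcal{S}\times\{0,1\}\to\mathbb{R}$ by $(\mathcal{T}_d^\pi V)(s,x)=d(s,x)+\sum_{a}\pi(a\mid s,x)\sum_{s'}p(s'\mid s,a)\,V(s',x\mathbf{1}_{\mathcal{G}^c}(s))$ for $s\in\mathcal{S}'$, and $(\mathcal{T}_d^\pi V)(s,x)=0$ for $s\in\mathcal{S}_{\mathrm{term}}$. Given $\alpha\in(0,1)$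 and $S_0\subseteq\mathcal{S}$, a function $L:\mathcal{S}\times\{0,1\}\to[0,1]$ is a Lyapunov function with respect to a policy $\pi$ if $(\mathcal{T}_d^{\pi}L)(s,x)\le L(s,x)$ for all $(s,x)\in\mathcal{S}\times\{0,1\}$ and $L(s,1)\le\alpha$ for all $s\in S_0$. *)

From HB Require Import structures.
From mathcomp Require Import all_boot.
From Stdlib Require Import Reals.
Set Implicit Arguments. Unset Strict Implicit. Unset Printing Implicit Defensive.
Open Scope R_scope.

HB.instance Definition _ := Monoid.isComLaw.Build R R0 Rplus
  (fun x y z => esym (Rplus_assoc x y z)) Rplus_comm Rplus_0_l.

Definition rsum (T : finType) (f : T -> R) : R := \big[Rplus/R0]_(i : T) f i.

Section MDP.
Variables (S A : finType).
(* p s a s' = p(s' | s, a) *)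
Variable p : S -> A -> S -> R.
(* G : unsafe target set, Sterm : terminal states *)
Variables (G Sterm : pred S).

Definition is_kernel : Prop :=
  (forall s a s', 0 <= p s a s') /\ (forall s a, rsum (p s a) = 1).

Definition is_dist (q : A -> R) : Prop :=
  (forall a, 0 <= q a) /\ rsum q = 1.

(* stochastic Markov policy on the augmented state (s,x), x : bool ~ {0,1} *)
Definition is_policy (pi : S -> bool -> A -> R) : Prop :=
  forall s x, is_dist (pi s x).

Definition dcost (s : S) (x : bool) : R := if x && G s then 1 else 0.

Definition xnext (s : S) (x : bool) : bool := x && ~~ G s.

(* Bellman operator at (s,x), depending only on the local distribution
   q = pi(. | s, x) *)
Definition Tloc (q : A -> R) (V : S -> bool -> R) (s : S) (x : bool) : R :=
  if Sterm s then 0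
  else dcost s x + rsum (fun a => q a * rsum (fun s' => p s a s' * V s' (xnext s x))).

Definition Td (pi : S -> bool -> A -> R) (V : S -> bool -> R) (s : S) (x : bool) : R :=
  Tloc (pi s x) V s x.

Definition is_lyapunov (alpha : R) (S0 : pred S) (pi : S -> bool -> A -> R)
    (L : S -> bool -> R) : Prop :=
  (forall s x, 0 <= L s x <= 1) /\
  (forall s x, Td pi L s x <= L s x) /\
  (forall s, S0 s -> L s true <= alpha).

(* mu pi s0 x0 t s x = P^pi( s_t = s, x_t = x, s_0,...,s_{t-1} not terminal
   | (s_0,x_0) = (s0,x0) ) *)
Fixpoint mu (pi : S -> bool -> A -> R) (s0 : S) (x0 : bool) (t : nat)
    (s' : S) (x' : bool) : R :=
  match t with
  | O => if (s' == s0) && (x' == x0) then 1 else 0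
  | t'.+1 =>
      rsum (fun s => rsum (fun x : bool =>
        if Sterm s then 0
        else if x' == xnext s x then
          mu pi s0 x0 t' s x * rsum (fun a => pi s x a * p s a s')
        else 0))
  end.

(* E^pi[ d(s_t,x_t) 1{t < T*} ] *)
Definition cost_term (pi : S -> bool -> A -> R) (s0 : S) (x0 : bool) (t : nat) : R :=
  rsum (fun s => rsum (fun x : bool =>
    if Sterm s then 0 else mu pi s0 x0 t s x * dcost s x)).

(* P^pi( T* = t ) *)
Definition term_prob (pi : S -> bool -> A -> R) (s0 : S) (x0 : bool) (t : nat) : R :=
  rsum (fun s => rsum (fun x : bool =>
    if Sterm s then mu pi s0 x0 t s x else 0)).

(* v = V^pi(s0,x0) = E^pi[ sum_{t=0}^{T*-1} d(s_t,x_t) ]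
   = sum_{t>=0} E^pi[ d(s_t,x_t) 1{t < T*} ] *)
Definition HasValue (pi : S -> bool -> A -> R) (s0 : S) (x0 : bool) (v : R) : Prop :=
  Un_cv (fun n => sum_f_R0 (cost_term pi s0 x0) n) v.

Definition standing_assumption : Prop :=
  exists m : nat, forall pi, is_policy pi -> forall s0 x0,
    0 < sum_f_R0 (term_prob pi s0 x0) m.

(* W = T_exp V : W(s,x) is the maximum of (T_d^q V)(s,x) over distributions q
   on A with (T_d^q L)(s,x) <= L(s,x)  (attained, and an upper bound). *)
Definition IsTexp (L V W : S -> bool -> R) : Prop :=
  forall s x,
    (exists q, is_dist q /\ Tloc q L s x <= L s x /\ Tloc q V s x = W s x) /\
    (forall q, is_dist q -> Tloc q L s x <= L s x -> Tloc q V s x <= W s x).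

End MDP.

From HB Require Import structures.
From mathcomp Require Import all_boot.
From Stdlib Require Import Reals Lra Psatz IndefiniteDescription FunctionalExtensionality.
Open Scope R_scope.
Set Implicit Arguments. Unset Strict Implicit.

(* The maximum defining [T_exp] is a linear program in the distribution [q] with a single
   linear constraint, so it is attained at a mixture of at most two point masses, optimality
   being certified by a nonnegative Lagrange multiplier.  A maximizer for one argument is feasible
   for any other, hence [|T_exp V - T_exp V'|] is bounded by a one-step expectation of [|V - V'|]:
   differences along [T_exp]-orbits are dominated by a chain killed on [S_term].  Iterating the
   all-actions predecessor operator from [S_term] stabilizes, and by the standing assumption at
   the whole state space, so from every state [S_term] is hit within [N] steps with probability at
   least [c^N] ([c] the least positive transition probability) whatever the actions; dominated
   sequences therefore decay geometrically.  This yields uniqueness of the fixed point and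
   convergence of value iteration, while existence follows from the monotone, bounded value
   iteration started at [0].  Finally, the partial sums of the expected cost of a policy are the
   iterates of its Bellman operator started at [0]: for [pi_e] they converge to [V_exp] by the
   same domination, and for any feasible policy they stay below [V_exp], which is a
   supersolution of its Bellman operator. *)

(** * Finite sums and real sequences *)

Lemma cv_const (c : R) : Un_cv (fun _ => c) c.
Proof. by move=> eps eps0; exists 0%nat => n _; rewrite /R_dist Rminus_diag Rabs_R0. Qed.

Section RealSums.
Variable T : finType.
Implicit Types f g : T -> R.

Lemma rsum_ext f g : (forall i, f i = g i) -> rsum f = rsum g.
Proof. by move=> fg; apply: eq_bigr => i _. Qed.

Lemma rsum_le f g : (forall i, f i <= g i) -> rsum f <= rsum g.
Proof.
move=> fg; apply: (big_ind2 (fun a b => a <= b)) => //; first exact: Rle_refl.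
by move=> *; lra.
Qed.

Lemma rsum_add f g : rsum (fun i => f i + g i) = rsum f + rsum g.
Proof. exact: big_split. Qed.

Lemma rsum_mulr c f : rsum (fun i => c * f i) = c * rsum f.
Proof.
rewrite /rsum; apply: (big_ind2 (fun a b => a = c * b)) => //; first by rewrite Rmult_0_r.
by move=> a1 a2 b1 b2 -> ->; ring.
Qed.

Lemma rsum_mull c f : rsum (fun i => f i * c) = rsum f * c.
Proof. by rewrite Rmult_comm -rsum_mulr; apply: rsum_ext => i; ring. Qed.

Lemma rsum_sub f g : rsum (fun i => f i - g i) = rsum f - rsum g.
Proof.
have -> : rsum f - rsum g = rsum f + -1 * rsum g by ring.
by rewrite -rsum_mulr -rsum_add; apply: rsum_ext => i; ring.
Qed.

Lemma rsum_eq0 f : (forall i, f i = 0) -> rsum f = 0.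
Proof. by move=> f0; rewrite /rsum big1. Qed.

Lemma rsum_ge0 f : (forall i, 0 <= f i) -> 0 <= rsum f.
Proof. by move=> f0; rewrite -(rsum_eq0 (f := fun _ => 0)) //; apply: rsum_le. Qed.

Lemma rsum_ge_term f i : (forall j, 0 <= f j) -> f i <= rsum f.
Proof.
move=> f0; rewrite /rsum (bigD1 i) //=.
have : 0 <= \big[Rplus/R0]_(j | j != i) f j.
  by apply: (big_ind (fun a => 0 <= a)) => //; [lra | move=> *; lra].
lra.
Qed.

Lemma rsum_dirac i (h : T -> R) : rsum (fun j => (if j == i then 1 else 0) * h j) = h i.
Proof.
rewrite /rsum (bigD1 i) //= ?eqxx big1 => [|j /negbTE ->]; ring.
Qed.

Lemma rsum_dist_le (r g : T -> R) M c d j :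
  (forall i, 0 <= r i) -> rsum r = 1 -> (forall i, g i <= M) ->
  0 <= c <= r j -> 0 <= d -> g j <= M - d ->
  rsum (fun i => r i * g i) <= M - c * d.
Proof.
move=> r0 r1 gM crj d0 gj.
have -> : rsum (fun i => r i * g i) = M - rsum (fun i => r i * (M - g i)).
  by rewrite -[M in M - _]Rmult_1_l -r1 -rsum_mull -rsum_sub; apply: rsum_ext => i; ring.
have : r j * (M - g j) <= rsum (fun i => r i * (M - g i)).
  by apply: (rsum_ge_term (f := fun i => r i * (M - g i))) => i; apply: Rmult_le_pos => //; have := gM i; lra.
have : c * d <= r j * (M - g j) by apply: Rmult_le_compat; lra.
lra.
Qed.

Lemma cv_rsum (F : nat -> T -> R) (l : T -> R) :
  (forall i, Un_cv (fun k => F k i) (l i)) -> Un_cv (fun k => rsum (F k)) (rsum l).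
Proof.
rewrite /rsum unlock /reducebig; elim: (index_enum T) => [|i s IH] cvF /=.
  exact: cv_const.
exact: CV_plus (cvF i) (IH cvF).
Qed.

Lemma fin_argmax_in (P : pred T) (g : T -> R) t0 : P t0 ->
  exists2 t, P t & forall t', P t' -> g t' <= g t.
Proof.
move=> Pt0; suff [t st tmax] : exists2 t, t \in [seq t <- enum T | P t] &
    forall t', t' \in [seq t <- enum T | P t] -> g t' <= g t.
  move: st; rewrite mem_filter => /andP [Pt _]; exists t => // t' Pt'.
  by apply: tmax; rewrite mem_filter Pt' mem_enum.
have : [seq t <- enum T | P t] != [::].
  apply/eqP => e; have : t0 \in [seq t <- enum T | P t] by rewrite mem_filter Pt0 mem_enum.
  by rewrite e.
elim: [seq t <- enum T | P t] => // t s IH _.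
have [-> | [u us umax]] : s = [::] \/ exists2 u, u \in s & forall t', t' \in s -> g t' <= g u.
- by case: s IH => [|u s] IH; [left | right; apply: IH].
- by exists t => [|t']; rewrite ?inE ?eqxx // => /eqP ->; lra.
case: (Rle_dec (g t) (g u)) => tu.
  by exists u => [|t']; rewrite inE ?us ?orbT // => /orP [/eqP -> // | /umax].
exists t => [|t']; first by rewrite inE eqxx.
by rewrite inE => /orP [/eqP -> | /umax]; lra.
Qed.

End RealSums.

Lemma rsum_exchange (T U : finType) (F : T -> U -> R) :
  rsum (fun i => rsum (fun j => F i j)) = rsum (fun j => rsum (fun i => F i j)).
Proof. exact: exchange_big. Qed.

Lemma rsum_pair (T U : finType) (F : T -> U -> R) :
  rsum (fun i => rsum (fun j => F i j)) = rsum (fun z : T * U => F z.1 z.2).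
Proof. exact: pair_big. Qed.

Lemma sum_f_R0_rsum (T : finType) (F : nat -> T -> R) n :
  sum_f_R0 (fun t => rsum (F t)) n = rsum (fun i => sum_f_R0 (fun t => F t i) n).
Proof. by elim: n => [|n IH] //=; rewrite IH -rsum_add. Qed.

Lemma sum_f_R0_mulr (c : R) (f : nat -> R) n : sum_f_R0 (fun t => c * f t) n = c * sum_f_R0 f n.
Proof. by elim: n => [|n IH] /=; [|rewrite IH]; ring. Qed.

Lemma sum_f_R0_succ (f : nat -> R) n : sum_f_R0 f n.+1 = f 0%nat + sum_f_R0 (fun t => f t.+1) n.
Proof. by elim: n => [|n IH] /=; [|rewrite /= in IH; rewrite IH]; ring. Qed.

Lemma cv_ext (u v : nat -> R) l : (forall n, u n = v n) -> Un_cv u l -> Un_cv v l.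
Proof. by move=> uv cvu eps eps0; have [N uN] := cvu eps eps0; exists N => n; rewrite -uv; apply: uN. Qed.

Lemma cv_succ (u : nat -> R) l : Un_cv u l -> Un_cv (fun n => u n.+1) l.
Proof. by move=> cvu eps eps0; have [N uN] := cvu eps eps0; exists N => n nN; apply: uN; lia. Qed.

Lemma cv_of_dist_cv0 (u : nat -> R) l : Un_cv (fun n => Rabs (u n - l)) 0 -> Un_cv u l.
Proof.
move=> cv0 eps eps0; have [N uN] := cv0 eps eps0; exists N => n nN.
by have := uN n nN; rewrite /R_dist Rminus_0_r Rabs_Rabsolu.
Qed.

(** * A linear program over distributions *)

Section LinearMax.
Variable A : finType.
Variables (f c : A -> R) (b : R).

Local Notation mean q h := (rsum (fun a => q a * h a)).

(* Given [c a <= b], [mix2 a a'] puts the largest weight on [a'] that keeps the mean of [c]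
   below [b]. *)
Definition mix_weight (a a' : A) : R :=
  if Rle_dec (c a') b then 1 else (c a' - b) / (c a' - c a).

Definition mix2 (a a' : A) : A -> R := fun i =>
  mix_weight a a' * (if i == a then 1 else 0) + (1 - mix_weight a a') * (if i == a' then 1 else 0).

Definition mix_value (a a' : A) : R := mix_weight a a' * f a + (1 - mix_weight a a') * f a'.

Lemma mean_mix2 a a' (h : A -> R) :
  mean (mix2 a a') h = mix_weight a a' * h a + (1 - mix_weight a a') * h a'.
Proof.
rewrite -(rsum_dirac a h) -(rsum_dirac a' h) -!rsum_mulr -rsum_add.
by apply: rsum_ext => i; rewrite /mix2; ring.
Qed.

Lemma mix_weight_bounds a a' : c a <= b ->
  0 <= mix_weight a a' <= 1 /\ mix_weight a a' * c a + (1 - mix_weight a a') * c a' <= b.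
Proof.
move=> ca_b; rewrite /mix_weight; case: Rle_dec => ca'_b /=; first (split; [split|]; lra).
have e : (c a' - b) / (c a' - c a) * (c a' - c a) = c a' - b by field; lra.
split; [split|]; nra.
Qed.

Lemma mix_weight_balance a a' : c a <= b < c a' ->
  mix_weight a a' * (c a' - c a) = c a' - b.
Proof. by move=> cb; rewrite /mix_weight; case: Rle_dec => ? /=; [lra | field; lra]. Qed.

Lemma mix2_dist a a' : c a <= b -> is_dist (mix2 a a').
Proof.
move=> ca_b; have [[w0 w1] _] := mix_weight_bounds a' ca_b.
split=> [i|]; first by rewrite /mix2; case: (i == a); case: (i == a'); nra.
by have := mean_mix2 a a' (fun _ => 1); rewrite (rsum_ext (g := mix2 a a')) => [->|i]; ring.
Qed.

(* The mixture of [a] and [a'] saturates the constraint. *)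
Lemma mix_excess a a' m : c a <= b < c a' -> mix_value a a' <= m ->
  (f a - m) * (c a' - b) <= (f a' - m) * (c a - b).
Proof.
move=> cb; have := mix_weight_balance cb; rewrite /mix_value.
set w := mix_weight a a' => wbal wm.
have neg : w * (f a - m) + (1 - w) * (f a' - m) <= 0 by lra.
have : (w * (f a - m) + (1 - w) * (f a' - m)) * (c a' - c a) <= 0 by nra.
have -> : (w * (f a - m) + (1 - w) * (f a' - m)) * (c a' - c a)
  = (f a - m) * (w * (c a' - c a)) + (f a' - m) * (c a' - c a - w * (c a' - c a)) by ring.
rewrite wbal (_ : c a' - c a - (c a' - b) = b - c a); [lra | ring].
Qed.

Lemma lagrange_multiplier a1 a2 :
  (forall a a', c a <= b -> mix_value a a' <= mix_value a1 a2) ->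
  exists2 lam, 0 <= lam & forall a, f a <= mix_value a1 a2 + lam * (c a - b).
Proof.
set m := mix_value a1 a2 => best.
have pure a : c a <= b -> f a <= m.
  move=> ca_b; have := best a a ca_b; rewrite /mix_value /mix_weight.
  by case: Rle_dec => //= _; lra.
case: (pickP (fun a => Rlt_dec b (c a))) => [a0 /sumboolP ca0 | none]; last first.
  exists 0 => [|a]; first lra.
  have := none a; case: Rlt_dec => //= ca _; have := pure a; lra.
pose ratio a := (f a - m) / (c a - b).
have [a' /sumboolP ca' a'max] :=
  @fin_argmax_in _ (fun a => Rlt_dec b (c a)) ratio a0 (introT (sumboolP _) ca0).
exists (Rmax 0 (ratio a')) => [|a]; first exact: Rmax_l.
have ratioE a'' : b < c a'' -> f a'' - m = ratio a'' * (c a'' - b).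
  by move=> ?; rewrite /ratio; field; lra.
case: (Rlt_dec b (c a)) => [ca | /Rnot_lt_le ca].
- have := ratioE a ca; have := a'max a (introT (sumboolP _) ca).
  have := Rmax_r 0 (ratio a'); nra.
- have := mix_excess (conj ca ca') (best a a' ca); rewrite (ratioE a' ca') => exc.
  have : f a - m <= ratio a' * (c a - b) by nra.
  have := pure a ca; rewrite /Rmax; case: Rle_dec => _; lra.
Qed.

Lemma exists_le_of_mean_le q : is_dist q -> mean q c <= b -> exists a, c a <= b.
Proof.
move=> [q0 q1] qc; have [a0 _] : exists a0 : A, true.
  case: (pickP (fun _ : A => true)) => [a0 _ | none]; first by exists a0.
  by move: q1; rewrite rsum_eq0 => [|a]; [lra | have := none a].
have [amin _ aminE] := @fin_argmax_in _ predT (fun a => - c a) a0 isT.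
exists amin; apply: Rle_trans qc.
rewrite -[c amin]Rmult_1_l -q1 -rsum_mull; apply: rsum_le => a.
by apply: Rmult_le_compat_l => //; have := aminE a isT; lra.
Qed.

Lemma linear_max_dist :
  (exists q0, is_dist q0 /\ mean q0 c <= b) ->
  exists q, [/\ is_dist q, mean q c <= b &
    forall q', is_dist q' -> mean q' c <= b -> mean q' f <= mean q f].
Proof.
move=> [q0 [q0d q0c]]; have [a0 ca0] := exists_le_of_mean_le q0d q0c.
have [[a1 a2] /sumboolP /= ca1 best] := @fin_argmax_in _
  (fun t : A * A => Rle_dec (c t.1) b) (fun t => mix_value t.1 t.2) (a0, a0)
  (introT (sumboolP _) ca0).
have [lam lam0 lamE] : exists2 lam, 0 <= lam &
    forall a, f a <= mix_value a1 a2 + lam * (c a - b).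
  by apply: lagrange_multiplier => a a' ca; apply: (best (a, a')); apply/sumboolP.
exists (mix2 a1 a2); split; [exact: mix2_dist | by rewrite mean_mix2; case: (mix_weight_bounds a2 ca1) |].
move=> q' [q'0 q'1] q'c; rewrite mean_mix2 -/(mix_value a1 a2).
apply: Rle_trans (rsum_le (fun a => Rmult_le_compat_l _ _ _ (q'0 a) (lamE a))) _.
have -> : rsum (fun a => q' a * (mix_value a1 a2 + lam * (c a - b)))
    = (mix_value a1 a2 - lam * b) * rsum q' + lam * mean q' c.
  by rewrite -!rsum_mulr -rsum_add; apply: rsum_ext => a; ring.
rewrite q'1; have := Rmult_le_compat_l _ _ _ lam0 q'c; lra.
Qed.

End LinearMax.

(** * One-step operators *)

Section Propagation.
Variables (S A : finType) (p : S -> A -> S -> R) (G Sterm : pred S).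
Hypothesis Hp : is_kernel p.
Implicit Types (q : A -> R) (u v : S -> bool -> R).

Definition Ploc q u s x : R :=
  if Sterm s then 0 else rsum (fun a => q a * rsum (fun s' => p s a s' * u s' (xnext G s x))).

Definition live_cost s x : R := if Sterm s then 0 else dcost G s x.

Lemma TlocE q u s x : Tloc p G Sterm q u s x = live_cost s x + Ploc q u s x.
Proof. by rewrite /Tloc /live_cost /Ploc; case: (Sterm s); rewrite ?Rplus_0_r. Qed.

Lemma live_cost_ge0 s x : 0 <= live_cost s x.
Proof. by rewrite /live_cost /dcost; case: (Sterm s); [|case: (_ && _)]; lra. Qed.

Lemma Ploc_le q u v s x : (forall a, 0 <= q a) -> (forall s x, u s x <= v s x) ->
  Ploc q u s x <= Ploc q v s x.
Proof.
move=> q0 uv; rewrite /Ploc; case: (Sterm s); first lra.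
apply: rsum_le => a; apply: Rmult_le_compat_l => //; apply: rsum_le => s'.
by apply: Rmult_le_compat_l; [case: Hp | apply: uv].
Qed.

Lemma Ploc_Sterm q u s x : Sterm s -> Ploc q u s x = 0.
Proof. by rewrite /Ploc => ->. Qed.

Lemma Ploc_live q u s x : ~~ Sterm s ->
  Ploc q u s x = rsum (fun a => q a * rsum (fun s' => p s a s' * u s' (xnext G s x))).
Proof. by rewrite /Ploc => /negbTE ->. Qed.

Lemma Ploc0 q s x : Ploc q (fun _ _ => 0) s x = 0.
Proof.
rewrite /Ploc; case: (Sterm s) => //; apply: rsum_eq0 => a.
by rewrite rsum_eq0 => [|s']; ring.
Qed.

Lemma Ploc_lin q al be u v s x :
  Ploc q (fun s x => al * u s x + be * v s x) s x = al * Ploc q u s x + be * Ploc q v s x.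
Proof.
rewrite /Ploc; case: (Sterm s); first ring.
rewrite -!rsum_mulr -rsum_add; apply: rsum_ext => a; set y := xnext G s x.
have -> : rsum (fun s' => p s a s' * (al * u s' y + be * v s' y))
    = al * rsum (fun s' => p s a s' * u s' y) + be * rsum (fun s' => p s a s' * v s' y).
  by rewrite -!rsum_mulr -rsum_add; apply: rsum_ext => s'; ring.
ring.
Qed.

Lemma Ploc_ge0 q u s x : (forall a, 0 <= q a) -> (forall s x, 0 <= u s x) -> 0 <= Ploc q u s x.
Proof.
move=> q0 u0; have zero s' x' : 0 * u s' x' + 0 * u s' x' <= u s' x'.
  by have := u0 s' x'; lra.
have := Ploc_le s x q0 zero; rewrite Ploc_lin; lra.
Qed.

Lemma Ploc_le_const q u M s x : is_dist q -> 0 <= M -> (forall s x, u s x <= M) ->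
  Ploc q u s x <= M.
Proof.
move=> [q0 q1] M0 uM; apply: Rle_trans (Ploc_le s x q0 uM) _.
rewrite /Ploc; case: (Sterm s) => //.
rewrite (rsum_ext (g := fun a => q a * M)) => [|a]; first by rewrite rsum_mull q1; lra.
by case: Hp => _ p1; rewrite rsum_mull p1 Rmult_1_l.
Qed.

Lemma Ploc_abs q u s x : (forall a, 0 <= q a) ->
  Rabs (Ploc q u s x) <= Ploc q (fun s x => Rabs (u s x)) s x.
Proof.
move=> q0; apply: Rabs_le; split; last by apply: Ploc_le => // s' x'; apply: Rle_abs.
have neg s' x' : -1 * Rabs (u s' x') + 0 * u s' x' <= u s' x'.
  by have := Rle_abs (- u s' x'); rewrite Rabs_Ropp; lra.
have := Ploc_le s x q0 neg; rewrite Ploc_lin; lra.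
Qed.

Lemma Tloc_sub q u v s x :
  Tloc p G Sterm q u s x - Tloc p G Sterm q v s x = Ploc q (fun s x => u s x - v s x) s x.
Proof.
rewrite !TlocE -[RHS]Rmult_1_l; have := Ploc_lin q 1 (-1) u v s x.
rewrite (_ : (fun s x => 1 * u s x + -1 * v s x) = fun s x => u s x - v s x) => [->|]; first ring.
by apply: functional_extensionality => s'; apply: functional_extensionality => x'; ring.
Qed.

Lemma Tloc_le q u v s x : (forall a, 0 <= q a) -> (forall s x, u s x <= v s x) ->
  Tloc p G Sterm q u s x <= Tloc p G Sterm q v s x.
Proof. by move=> q0 uv; rewrite !TlocE; have := Ploc_le s x q0 uv; lra. Qed.

Lemma Tloc_ge0 q u s x : (forall a, 0 <= q a) -> (forall s x, 0 <= u s x) ->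
  0 <= Tloc p G Sterm q u s x.
Proof. by move=> q0 u0; rewrite TlocE; have := Ploc_ge0 s x q0 u0; have := live_cost_ge0 s x; lra. Qed.

Lemma cv_Ploc q (u : nat -> S -> bool -> R) l s x :
  (forall s x, Un_cv (fun k => u k s x) (l s x)) ->
  Un_cv (fun k => Ploc q (u k) s x) (Ploc q l s x).
Proof.
move=> cvu; rewrite /Ploc; case: (Sterm s); first exact: cv_const.
apply: cv_rsum => a; apply: CV_mult; first exact: cv_const.
by apply: cv_rsum => s'; apply: CV_mult; [apply: cv_const | apply: cvu].
Qed.

End Propagation.

(** * Geometric decay of dominated sequences *)

Lemma bernoulli_le (n : nat) (d : R) : 0 <= d <= 1 -> 1 - INR n * d <= (1 - d) ^ n.
Proof.
move=> d01; elim: n => [|n IH]; first by rewrite /=; lra.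
by rewrite S_INR /=; have := pos_INR n; nra.
Qed.

Lemma exists_root_above (gam : R) (N : nat) : 0 <= gam < 1 -> (0 < N)%nat ->
  exists2 rho, 0 < rho < 1 & gam <= rho ^ N.
Proof.
move=> gam01 N0; have N1 : 1 <= INR N by apply: (le_INR 1); apply/leP.
pose d := (1 - gam) / (2 * INR N).
have dN : INR N * d = (1 - gam) / 2 by rewrite /d; field; lra.
have d0 : 0 < d by apply: Rdiv_lt_0_compat; lra.
have d1 : d <= 1 / 2.
  have : 1 * d <= INR N * d by apply: Rmult_le_compat_r; lra.
  lra.
exists (1 - d); first lra.
by have := bernoulli_le N (d := d) ltac:(lra); lra.
Qed.

Lemma cv0_geometric (u : nat -> R) C rho : 0 <= rho < 1 ->
  (forall k, 0 <= u k <= C * rho ^ k) -> Un_cv u 0.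
Proof.
move=> rho01 uk eps eps0.
have C0 : 0 <= C by have := uk 0%nat; rewrite /=; lra.
have [N rhoN] := pow_lt_1_zero rho ltac:(rewrite Rabs_right; lra) (eps / (C + 1))
  ltac:(apply: Rdiv_lt_0_compat; lra).
exists N => n nN; rewrite /R_dist Rminus_0_r Rabs_right; last by have := uk n; lra.
have := rhoN n nN; rewrite Rabs_right; last by apply/Rle_ge/pow_le; lra.
move=> small; have : (C + 1) * rho ^ n < (C + 1) * (eps / (C + 1)).
  by apply: Rmult_lt_compat_l; lra.
rewrite (_ : (C + 1) * (eps / (C + 1)) = eps); last by field; lra.
have := uk n; have := pow_le rho n (proj1 rho01); nra.
Qed.

Section BlockContraction.
Variables (X : Type) (f : nat -> X -> R) (N : nat) (gam rho M : R).
Hypotheses (rho01 : 0 < rho <= 1) (gam_rho : gam <= rho ^ N).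
Hypotheses (N_pos : (0 < N)%nat) (M0 : 0 <= M) (fM : forall k x, f k x <= M).
Hypothesis block : forall k B, 0 <= B -> (forall x, f k x <= B) ->
  forall x, f (k + N)%nat x <= gam * B.

Lemma block_contraction_geometric : forall k x, f k x <= M * rho ^ k / rho ^ N.
Proof.
have rhoN : 0 < rho ^ N by apply: pow_lt; lra.
have rho_anti m n : (m <= n)%nat -> rho ^ n <= rho ^ m.
  move=> mn; rewrite -(subnKC mn) pow_add.
  have : rho ^ (n - m) <= 1 by rewrite -(pow1 (n - m)); apply: pow_incr; lra.
  by have := pow_le rho m (Rlt_le _ _ (proj1 rho01)); nra.
pose bound k := M * rho ^ k / rho ^ N.
have bound0 k : 0 <= bound k.
  apply: Rmult_le_pos; last exact/Rlt_le/Rinv_0_lt_compat.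
  by apply: Rmult_le_pos => //; apply: pow_le; lra.
have bound_small k : (k <= N)%nat -> M <= bound k.
  move=> kN; rewrite /bound {1}(_ : M = M * rho ^ N / rho ^ N); last by field; lra.
  apply: Rmult_le_compat_r; first exact/Rlt_le/Rinv_0_lt_compat.
  by apply: Rmult_le_compat_l => //; apply: rho_anti.
have bound_shift k : (N <= k)%nat -> bound k = rho ^ N * bound (k - N)%nat.
  by move=> Nk; rewrite /bound -{1}(subnK Nk) pow_add; field; lra.
suff: forall n k, (k <= n)%nat -> forall x, f k x <= bound k by move=> le k; apply: le (leqnn k).
elim=> [|n IH] k kn y.
  by move: kn; rewrite leqn0 => /eqP ->; apply: Rle_trans (fM 0 y) (bound_small 0%nat _).
case: (leqP k N) => [kN | Nk]; first exact: Rle_trans (fM k y) (bound_small k kN).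
rewrite (bound_shift _ (ltnW Nk)) -{1}(subnK (ltnW Nk)).
apply: Rle_trans (block (bound0 (k - N)%nat) _ y) _.
  by move=> z; apply: IH; rewrite leq_subLR; apply: leq_trans kn _; rewrite -add1n leq_add2r.
by apply: Rmult_le_compat_r.
Qed.
End BlockContraction.

Section Decay.
Variables (S A : finType) (p : S -> A -> S -> R) (G Sterm : pred S).
Hypothesis Hp : is_kernel p.

Local Notation Ploc := (Ploc p G Sterm).

Definition dominated (f : nat -> S -> bool -> R) : Prop :=
  (forall i s x, 0 <= f i s x) /\
  (forall i s x, exists2 q, is_dist q & f i.+1 s x <= Ploc q (f i) s x).

Lemma dominated_le f M : dominated f -> 0 <= M -> (forall s x, f 0%nat s x <= M) ->
  forall i s x, f i s x <= M.
Proof.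
move=> [_ fstep] M0 f0; elim=> [//|i IH] s x.
by have [q qd le] := fstep i s x; apply: Rle_trans le _; apply: Ploc_le_const.
Qed.

Lemma dominated_shift f k : dominated f -> dominated (fun i => f (k + i)%nat).
Proof. by move=> [f0 fstep]; split=> // i s x; rewrite addnS; apply: fstep. Qed.

Definition pre_all (D : {set S}) : {set S} :=
  [set s | [forall a, [exists s', (s' \in D) && Rlt_dec 0 (p s a s')]]].

(* [reach_set k]: states from which every action sequence hits [Sterm] within [k] steps with
   positive probability. *)
Fixpoint reach_set (k : nat) : {set S} :=
  if k is k'.+1 then [set s | Sterm s] :|: pre_all (reach_set k') else [set s | Sterm s].

Lemma min_pos_transition :
  exists2 c, 0 < c <= 1 & forall s a s', 0 < p s a s' -> c <= p s a s'.
Proof.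
pose P (t : S * A * S) : bool := Rlt_dec 0 (p t.1.1 t.1.2 t.2).
case: (pickP P) => [t0 Pt0 | none]; last first.
  exists 1 => [|s a s' ps]; first lra.
  by have := none (s, a, s'); rewrite /P /=; case: Rlt_dec.
have [[[s1 a1] s1'] /sumboolP /= pos best] := fin_argmax_in (fun t => - p t.1.1 t.1.2 t.2) Pt0.
exists (p s1 a1 s1') => [|s a s' ps]; last first.
  by have := best (s, a, s') (introT (sumboolP _) ps); rewrite /=; lra.
split=> //; case: Hp => p0 p1; rewrite -(p1 s1 a1).
exact: (rsum_ge_term (f := p s1 a1)).
Qed.

Lemma dominated_reach_set c f M : (forall s a s', 0 < p s a s' -> c <= p s a s') ->
  0 < c <= 1 -> dominated f -> 0 <= M -> (forall s x, f 0%nat s x <= M) ->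
  forall n s, s \in reach_set n -> forall x, f n.+1 s x <= M * (1 - c ^ n.+1).
Proof.
move=> cmin c01 fdom M0 f0; have fM := dominated_le fdom M0 f0.
case: fdom => [_ fstep].
have powc k : 0 <= c ^ k <= 1.
  by split; [apply: pow_le; lra | rewrite -(pow1 k); apply: pow_incr; lra].
have term k s x : Sterm s -> f k.+1 s x <= M * (1 - c ^ k.+1).
  move=> st; have [q _] := fstep k s x; rewrite Ploc_Sterm //.
  by have := powc k.+1; nra.
elim=> [|n IH] s; rewrite /= !inE; first by move=> st x; apply: term.
case/orP=> [st x | /forallP reach x]; first exact: term.
case st: (Sterm s); first exact: term.
have [q [q0 q1] le] := fstep n.+1 s x; apply: Rle_trans le _.
have -> : M * (1 - c ^ n.+2) = rsum (fun a => q a * (M * (1 - c ^ n.+2))).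
  by rewrite rsum_mull q1 Rmult_1_l.
rewrite Ploc_live ?st //; apply: rsum_le => a; apply: Rmult_le_compat_l => //.
have /existsP [s' /andP [s'n /sumboolP ps']] := reach a.
have [p0 p1] := Hp; set y := xnext G s x.
have d0 : 0 <= M * c ^ n.+1 by apply: Rmult_le_pos => //; case: (powc n.+1).
have gap : f n.+1 s' y <= M - M * c ^ n.+1 by have := IH s' s'n y; lra.
have := rsum_dist_le (p0 s a) (p1 s a) (fun s'' => fM n.+1 s'' y)
  (conj (Rlt_le _ _ (proj1 c01)) (cmin _ _ _ ps')) d0 gap.
by rewrite (_ : M * (1 - c ^ n.+2) = M - c * (M * c ^ n.+1)) //=; ring.
Qed.

Lemma pre_all_sub (D D' : {set S}) : D \subset D' -> pre_all D \subset pre_all D'.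
Proof.
move=> DD'; apply/subsetP => s; rewrite !inE => /forallP pre; apply/forallP => a.
have /existsP [s' /andP [s'D ps']] := pre a.
by apply/existsP; exists s'; rewrite ps' (subsetP DD').
Qed.

Lemma Sterm_reach_set k s : Sterm s -> s \in reach_set k.
Proof. by case: k => [|k] st /=; rewrite !inE st. Qed.

Lemma reach_set_sub k : reach_set k \subset reach_set k.+1.
Proof.
elim: k => [|k IH] /=; first by apply/subsetP => s; rewrite !inE => ->.
by apply: setUS; apply: pre_all_sub.
Qed.

Lemma reach_set_stable : exists j, reach_set j = reach_set j.+1.
Proof.
suff grow (k : nat) : (exists j, reach_set j = reach_set j.+1) \/ (k <= #|reach_set k|)%nat.
  case: (grow #|S|.+1) => // big.
  by have := leq_trans big (max_card (reach_set #|S|.+1)); rewrite ltnn.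
elim: k => [|k [|IH]]; [by right | by left |].
case: (eqVneq (reach_set k) (reach_set k.+1)) => [e | ne]; first by left; exists k.
right; apply: leq_ltn_trans IH (proper_card _).
by rewrite properEneq ne reach_set_sub.
Qed.

Lemma mu_outside pi (D : {set S}) s0 x0 : s0 \notin D ->
  (forall s x s', s \notin D -> s' \in D -> rsum (fun a => pi s x a * p s a s') = 0) ->
  forall t s x, s \in D -> mu p G Sterm pi s0 x0 t s x = 0.
Proof.
move=> s0D leak; elim=> [|t IH] s x sD /=.
  by case: eqP => [e | //]; rewrite -e sD in s0D.
apply: rsum_eq0 => s1; apply: rsum_eq0 => x1.
case: (Sterm s1) => //; case: (_ == _) => //.
by case s1D: (s1 \in D); [rewrite IH // | rewrite leak ?s1D //]; ring.
Qed.

Lemma reach_set_full j : standing_assumption p G Sterm ->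
  reach_set j = reach_set j.+1 -> reach_set j = setT.
Proof.
move=> [m reachm] e; set D := reach_set j.
apply/setP => s0; rewrite inE; apply/negPn/negP => s0D.
pose avoids s a := [forall s', (s' \in D) ==> ~~ Rlt_dec 0 (p s a s')].
have escape s : s \notin D -> exists a, avoids s a.
  move=> sD; have : s \notin reach_set j.+1 by rewrite -e.
  rewrite /= !inE negb_or negb_forall => /andP [_ /existsP [a]].
  by rewrite negb_exists => /forallP none; exists a; apply/forallP => s'; rewrite implybE -negb_and.
have [a0 _] := escape s0 s0D.
pose choice s := if [pick a | avoids s a] is Some a then a else a0.
pose pi (s : S) (x : bool) a : R := if a == choice s then 1 else 0.
have pi_dirac s x h : rsum (fun a => pi s x a * h a) = h (choice s) by apply: rsum_dirac.
have pipol : is_policy pi.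
  move=> s x; split=> [a | ]; first by rewrite /pi; case: (_ == _); lra.
  by rewrite -(pi_dirac s x (fun _ => 1)); apply: rsum_ext => a; ring.
have leak s x s' : s \notin D -> s' \in D -> rsum (fun a => pi s x a * p s a s') = 0.
  move=> sD s'D; rewrite pi_dirac /choice; case: pickP => [a /forallP /(_ s') | none].
    rewrite s'D /= => /sumboolP /Rnot_lt_le ple; case: Hp => p0 _; have := p0 s a s'; lra.
  by have [a sa] := escape s sD; have := none a; rewrite sa.
have := reachm pi pipol s0 true; rewrite sum_eq_R0; first lra.
move=> t _; apply: rsum_eq0 => s; apply: rsum_eq0 => x.
case st: (Sterm s) => //.
exact: (@mu_outside pi D s0 true s0D leak t s x (Sterm_reach_set j st)).
Qed.

Lemma block_contraction : standing_assumption p G Sterm ->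
  exists N gam, [/\ (0 < N)%nat, 0 <= gam < 1 &
    forall f k B, dominated f -> 0 <= B -> (forall s x, f k s x <= B) ->
      forall s x, f (k + N)%nat s x <= gam * B].
Proof.
move=> standing; have [c c01 cmin] := min_pos_transition.
have [j ej] := reach_set_stable; have full := reach_set_full standing ej.
have cj : 0 < c ^ j.+1 <= 1.
  by split; [apply: pow_lt; lra | rewrite -(pow1 j.+1); apply: pow_incr; lra].
exists j.+1, (1 - c ^ j.+1); split=> //; first lra.
move=> f k B fdom B0 fk s x; rewrite Rmult_comm.
have f0 s' x' : (fun i => f (k + i)%nat) 0%nat s' x' <= B by rewrite addn0.
by apply: (dominated_reach_set cmin c01 (dominated_shift k fdom) B0 f0); rewrite full inE.
Qed.

Lemma fin_upper_bound (u : S -> bool -> R) : exists2 M, 0 <= M & forall s x, u s x <= M.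
Proof.
exists (rsum (fun s => rsum (fun x => Rabs (u s x)))) => [|s x].
  by apply: rsum_ge0 => s; apply: rsum_ge0 => x; apply: Rabs_pos.
apply: Rle_trans (Rle_abs _) _.
apply: Rle_trans (rsum_ge_term (f := fun x => Rabs (u s x)) x _) _ => [x'|]; first exact: Rabs_pos.
by apply: (rsum_ge_term (f := fun s => rsum (fun x => Rabs (u s x)))) => s'; apply: rsum_ge0 => x'; apply: Rabs_pos.
Qed.

Lemma geometric_decay : standing_assumption p G Sterm ->
  exists2 rho, 0 <= rho < 1 & forall f, dominated f ->
    exists2 C, 0 <= C & forall k s x, f k s x <= C * rho ^ k.
Proof.
move=> standing; have [N [gam [N0 gam01 block]]] := block_contraction standing.
have [rho rho01 gam_rho] := exists_root_above gam01 N0.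
exists rho => [|f fdom]; first lra.
have [M M0 f0M] := fin_upper_bound (f 0%nat).
have rhoN : 0 < rho ^ N by apply: pow_lt; lra.
exists (M / rho ^ N) => [|k s x].
  by apply: Rmult_le_pos => //; apply/Rlt_le/Rinv_0_lt_compat.
have := @block_contraction_geometric (S * bool) (fun k z => f k z.1 z.2) N gam rho M
  ltac:(lra) gam_rho N0 M0 (fun k z => dominated_le fdom M0 f0M k z.1 z.2)
  (fun k B B0 fk z => block f k B fdom B0 (fun s x => fk (s, x)) z.1 z.2) k (s, x).
by rewrite /=; lra.
Qed.

Lemma dominated_cv0 f : standing_assumption p G Sterm -> dominated f ->
  forall s x, Un_cv (fun k => f k s x) 0.
Proof.
move=> standing fdom s x; have [rho rho01 decay] := geometric_decay standing.
have [C _ fC] := decay f fdom.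
by apply: (cv0_geometric (C := C) rho01) => k; split; [case: fdom | apply: fC].
Qed.

End Decay.

(** * The constrained Bellman operator *)

Section ConstrainedBellman.
Variables (S A : finType) (p : S -> A -> S -> R) (G Sterm : pred S).
Hypothesis Hp : is_kernel p.
Variables (L : S -> bool -> R) (pi_s : S -> bool -> A -> R).
Hypotheses (Hpis : is_policy pi_s) (Hfeas : forall s x, Td p G Sterm pi_s L s x <= L s x).

Local Notation Tloc := (Tloc p G Sterm).
Local Notation Ploc := (Ploc p G Sterm).
Local Notation IsT := (IsTexp p G Sterm L).

Lemma Texp_exists_at V s x : exists w,
  (exists q, is_dist q /\ Tloc q L s x <= L s x /\ Tloc q V s x = w) /\
  (forall q, is_dist q -> Tloc q L s x <= L s x -> Tloc q V s x <= w).
Proof.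
case st: (Sterm s).
  exists 0; split=> [|q _ _]; last by rewrite /Tloc st; lra.
  by exists (pi_s s x); split; [apply: Hpis | split; [apply: Hfeas | rewrite /Tloc st]].
pose next W a := rsum (fun s' => p s a s' * W s' (xnext G s x)).
have Tloc_next q W : Tloc q W s x = dcost G s x + rsum (fun a => q a * next W a).
  by rewrite /Tloc st.
have feasible : exists q0, is_dist q0 /\ rsum (fun a => q0 a * next L a) <= L s x - dcost G s x.
  by exists (pi_s s x); split; [apply: Hpis | have := Hfeas s x; rewrite /Td Tloc_next; lra].
have [q [qd qL qmax]] := linear_max_dist (next V) feasible.
exists (Tloc q V s x); split; first by exists q; split=> //; rewrite Tloc_next; split=> //; lra.
by move=> q' q'd; rewrite !Tloc_next => q'L; have := qmax q' q'd ltac:(lra); lra.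
Qed.

Lemma Texp_exists V : exists W, IsT V W.
Proof.
have [F FE] := functional_choice (fun (z : S * bool) w =>
  (exists q, is_dist q /\ Tloc q L z.1 z.2 <= L z.1 z.2 /\ Tloc q V z.1 z.2 = w) /\
  (forall q, is_dist q -> Tloc q L z.1 z.2 <= L z.1 z.2 -> Tloc q V z.1 z.2 <= w))
  (fun z => Texp_exists_at V z.1 z.2).
by exists (fun s x => F (s, x)) => s x; apply: (FE (s, x)).
Qed.

Lemma IsTexp_le V V' W W' : IsT V W -> IsT V' W' -> (forall s x, V s x <= V' s x) ->
  forall s x, W s x <= W' s x.
Proof.
move=> TW TW' VV' s x; have [[q [qd [qL <-]]] _] := TW s x.
by apply: Rle_trans (proj2 (TW' s x) q qd qL); apply: Tloc_le => //; case: qd.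
Qed.

Lemma IsTexp_ge0 V W : IsT V W -> (forall s x, 0 <= V s x) -> forall s x, 0 <= W s x.
Proof.
move=> TW V0 s x; have [[q [qd [_ <-]]] _] := TW s x.
by apply: Tloc_ge0 => //; case: qd.
Qed.

(* A maximizer for either side is feasible for the other. *)
Lemma IsTexp_dist V V' W W' : IsT V W -> IsT V' W' -> forall s x, exists2 q, is_dist q &
  Rabs (W s x - W' s x) <= Ploc q (fun s x => Rabs (V s x - V' s x)) s x.
Proof.
move=> TW TW' s x.
have [[q [qd [qL qW]]] Wmax] := TW s x; have [[q' [q'd [q'L q'W']]] W'max] := TW' s x.
have W'q := W'max q qd qL; have Wq' := Wmax q' q'd q'L.
have dq := Tloc_sub p G Sterm q V V' s x; have dq' := Tloc_sub p G Sterm q' V V' s x.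
have aq := Ploc_abs G Sterm Hp (fun s x => V s x - V' s x) s x (proj1 qd).
have aq' := Ploc_abs G Sterm Hp (fun s x => V s x - V' s x) s x (proj1 q'd).
case: (Rle_dec 0 (W s x - W' s x)) => sign.
  exists q => //; rewrite Rabs_right; last lra.
  by have := Rle_abs (Ploc q (fun s x => V s x - V' s x) s x); lra.
exists q' => //; rewrite Rabs_left; last lra.
by have := Rle_abs (- Ploc q' (fun s x => V s x - V' s x) s x); rewrite Rabs_Ropp; lra.
Qed.

Lemma Texp_orbits_dominated (U U' : nat -> S -> bool -> R) :
  (forall k, IsT (U k) (U k.+1)) -> (forall k, IsT (U' k) (U' k.+1)) ->
  dominated p G Sterm (fun k s x => Rabs (U k s x - U' k s x)).
Proof.
move=> TU TU'; split=> [k s x | k s x]; first exact: Rabs_pos.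
exact: IsTexp_dist (TU k) (TU' k) s x.
Qed.

Hypothesis Hstand : standing_assumption p G Sterm.

Lemma Texp_fixed_unique V1 V2 : IsT V1 V1 -> IsT V2 V2 -> V1 = V2.
Proof.
move=> T1 T2; apply: functional_extensionality => s; apply: functional_extensionality => x.
have := dominated_cv0 Hp Hstand
  (Texp_orbits_dominated (U := fun _ => V1) (U' := fun _ => V2) (fun _ => T1) (fun _ => T2)) s x.
move/(UL_sequence _ _ _ (cv_const _)) => abs0.
by case: (Req_dec (V1 s x - V2 s x) 0) => [|/Rabs_no_R0 //]; lra.
Qed.

Lemma value_iteration_cv Vexp (Vs : nat -> S -> bool -> R) : IsT Vexp Vexp ->
  (forall k, IsT (Vs k) (Vs k.+1)) -> forall s x, Un_cv (fun k => Vs k s x) (Vexp s x).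
Proof.
move=> Tfix TVs s x; apply: cv_of_dist_cv0.
by have := dominated_cv0 Hp Hstand (Texp_orbits_dominated TVs (U' := fun _ => Vexp) (fun _ => Tfix)) s x.
Qed.

Lemma Texp_limit_fixed (Vs : nat -> S -> bool -> R) V :
  (forall k, IsT (Vs k) (Vs k.+1)) -> (forall k s x, Vs k s x <= Vs k.+1 s x) ->
  (forall s x, Un_cv (fun k => Vs k s x) (V s x)) -> IsT V V.
Proof.
move=> TVs incr cvV.
have Vs_le_V k s x : Vs k s x <= V s x := growing_ineq _ _ (fun k => incr k s x) (cvV s x) k.
have [W TW] := Texp_exists V.
have VW s x : V s x <= W s x.
  apply: Rle_cv_lim (cv_succ (cvV s x)) (cv_const (W s x)) => k.
  exact: IsTexp_le (TVs k) TW (Vs_le_V k) s x.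
have WV s x : W s x <= V s x.
  have [[q [qd [qL <-]]] _] := TW s x.
  have le k : Tloc q V s x <= Vs k.+1 s x + Ploc q (fun s x => V s x - Vs k s x) s x.
    have := proj2 (TVs k s x) q qd qL; have := Tloc_sub p G Sterm q V (Vs k) s x; lra.
  have cvP : Un_cv (fun k => Ploc q (fun s x => V s x - Vs k s x) s x) (Ploc q (fun _ _ => 0) s x).
    apply: cv_Ploc => s' x'; rewrite -(Rminus_diag (V s' x')).
    by apply: CV_minus; [apply: cv_const | apply: cvV].
  rewrite Ploc0 in cvP; rewrite -[V s x]Rplus_0_r.
  exact: Rle_cv_lim le (cv_const _) (CV_plus _ _ _ _ (cv_succ (cvV s x)) cvP).
have VeqW : V = W.
  by apply: functional_extensionality => s; apply: functional_extensionality => x; apply: Rle_antisym.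
by rewrite {2}VeqW.
Qed.

Lemma Texp_fixed_exists : exists2 V, IsT V V & forall s x, 0 <= V s x.
Proof.
have [Tf TfE] := functional_choice (fun V W => IsT V W) Texp_exists.
pose Vs k := iter k Tf (fun _ _ => 0).
have TVs k : IsT (Vs k) (Vs k.+1) := TfE (Vs k).
have Vs0 k s x : 0 <= Vs k s x.
  by elim: k s x => [|k IH] s x; [rewrite /=; lra | apply: IsTexp_ge0 (TVs k) IH s x].
have Vs_incr k s x : Vs k s x <= Vs k.+1 s x.
  by elim: k s x => [|k IH] s x; [apply: Vs0 | apply: IsTexp_le (TVs k) (TVs k.+1) IH s x].
have [rho rho01 decay] := geometric_decay Hp Hstand.
have [C C0 gapC] := decay _ (Texp_orbits_dominated (U := fun k => Vs k.+1) (fun k => TVs k.+1) TVs).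
have Vs_bound k s x : Vs k s x <= C / (1 - rho).
  suff : Vs k s x + C * rho ^ k / (1 - rho) <= C / (1 - rho).
    have : 0 <= C * rho ^ k / (1 - rho).
      by apply: Rmult_le_pos; [apply: Rmult_le_pos => //; apply: pow_le | apply/Rlt_le/Rinv_0_lt_compat]; lra.
    lra.
  elim: k => [|k IH]; first by rewrite /= Rmult_1_r; lra.
  have := gapC k s x; rewrite Rabs_right; last by have := Vs_incr k s x; lra.
  have -> : C * rho ^ k.+1 / (1 - rho) = C * rho ^ k / (1 - rho) - C * rho ^ k by rewrite /=; field; lra.
  lra.
have Vs_ub s x : has_ub (fun k => Vs k s x) by exists (C / (1 - rho)) => _ [k ->].
pose V s x := proj1_sig (growing_cv _ (fun k => Vs_incr k s x) (Vs_ub s x)).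
have cvV s x : Un_cv (fun k => Vs k s x) (V s x) := proj2_sig _.
exists V; first exact: Texp_limit_fixed TVs Vs_incr cvV.
move=> s x; apply: Rle_trans (Vs0 0%nat s x) _.
exact: growing_ineq _ _ (fun k => Vs_incr k s x) (cvV s x) 0%nat.
Qed.
End ConstrainedBellman.

(** * Policy evaluation *)

Section PolicyEvaluation.
Variables (S A : finType) (p : S -> A -> S -> R) (G Sterm : pred S).
Variable pi : S -> bool -> A -> R.

Local Notation mu := (mu p G Sterm pi).
Local Notation cost_term := (cost_term p G Sterm pi).

(* Transition kernel of the augmented chain [(s_t, x_t)], killed on terminal states. *)
Definition aug_kernel (s : S) (x : bool) (w : S * bool) : R :=
  if Sterm s then 0 else if w.2 == xnext G s x then rsum (fun a => pi s x a * p s a w.1) else 0.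

Lemma rsum_dirac_pair (F : S * bool -> R) s0 x0 :
  rsum (fun z : S * bool => (if (z.1 == s0) && (z.2 == x0) then 1 else 0) * F z) = F (s0, x0).
Proof. by rewrite -(rsum_dirac (s0, x0) F); apply: rsum_ext => -[s x]; rewrite xpair_eqE. Qed.

Lemma mu_succ_last t s0 x0 s' x' :
  mu s0 x0 t.+1 s' x' = rsum (fun z : S * bool => mu s0 x0 t z.1 z.2 * aug_kernel z.1 z.2 (s', x')).
Proof.
rewrite -(rsum_pair (fun s x => mu s0 x0 t s x * aug_kernel s x (s', x'))) /=.
apply: rsum_ext => s; apply: rsum_ext => x; rewrite /aug_kernel /=.
by case: (Sterm s); [|case: (_ == _)]; ring.
Qed.

Lemma mu_succ_first t s0 x0 s' x' :
  mu s0 x0 t.+1 s' x' = rsum (fun w : S * bool => aug_kernel s0 x0 w * mu w.1 w.2 t s' x').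
Proof.
elim: t s' x' => [|t IH] s' x'.
  rewrite mu_succ_last (rsum_dirac_pair (fun z => aug_kernel z.1 z.2 (s', x'))).
  rewrite -(rsum_dirac_pair (aug_kernel s0 x0) s' x').
  by apply: rsum_ext => -[s x] /=; rewrite [s' == s]eq_sym [x' == x]eq_sym; ring.
rewrite mu_succ_last (rsum_ext (g := fun z : S * bool => rsum (fun w : S * bool =>
  aug_kernel s0 x0 w * (mu w.1 w.2 t z.1 z.2 * aug_kernel z.1 z.2 (s', x'))))); last first.
  by move=> z; rewrite IH -rsum_mull; apply: rsum_ext => w; ring.
by rewrite rsum_exchange; apply: rsum_ext => w; rewrite rsum_mulr mu_succ_last.
Qed.

Lemma cost_termE t s0 x0 :
  cost_term s0 x0 t = rsum (fun z : S * bool => mu s0 x0 t z.1 z.2 * live_cost G Sterm z.1 z.2).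
Proof.
rewrite /live_cost -(rsum_pair (fun s x => mu s0 x0 t s x * (if Sterm s then 0 else dcost G s x))).
by apply: rsum_ext => s; apply: rsum_ext => x; case: (Sterm s); ring.
Qed.

Lemma cost_term0 s0 x0 : cost_term s0 x0 0 = live_cost G Sterm s0 x0.
Proof. by rewrite cost_termE; apply: (rsum_dirac_pair (fun z => live_cost G Sterm z.1 z.2)). Qed.

Lemma cost_term_succ t s0 x0 :
  cost_term s0 x0 t.+1 = rsum (fun w : S * bool => aug_kernel s0 x0 w * cost_term w.1 w.2 t).
Proof.
rewrite cost_termE (rsum_ext (g := fun z : S * bool => rsum (fun w : S * bool =>
  aug_kernel s0 x0 w * (mu w.1 w.2 t z.1 z.2 * live_cost G Sterm z.1 z.2)))); last first.
  by move=> z; rewrite mu_succ_first -rsum_mull; apply: rsum_ext => w; ring.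
by rewrite rsum_exchange; apply: rsum_ext => w; rewrite rsum_mulr cost_termE.
Qed.

Lemma Td_aug_kernel V s x :
  Td p G Sterm pi V s x = live_cost G Sterm s x + rsum (fun w : S * bool => aug_kernel s x w * V w.1 w.2).
Proof.
rewrite /Td TlocE -(rsum_pair (fun s' x' => aug_kernel s x (s', x') * V s' x')); congr (_ + _).
rewrite /Ploc /aug_kernel /=; case: (Sterm s).
  by rewrite rsum_eq0 // => s'; rewrite rsum_eq0 // => x'; ring.
rewrite (rsum_ext (g := fun s' => rsum (fun a => pi s x a * p s a s' * V s' (xnext G s x)))).
  by rewrite rsum_exchange; apply: rsum_ext => a; rewrite -rsum_mulr; apply: rsum_ext => s'; ring.
move=> s'; rewrite rsum_mull /rsum big_bool /=.
by case: (xnext G s x); rewrite /= ?eqxx; ring.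
Qed.

Lemma partial_cost_iter n s x :
  sum_f_R0 (cost_term s x) n = iter n.+1 (Td p G Sterm pi) (fun _ _ => 0) s x.
Proof.
elim: n s x => [|n IH] s x.
  by rewrite /= cost_term0 Td_aug_kernel rsum_eq0 => [|w]; ring.
rewrite sum_f_R0_succ cost_term0 iterS Td_aug_kernel; congr (_ + _).
rewrite (sum_eq _ (fun t => rsum (fun w : S * bool => aug_kernel s x w * cost_term w.1 w.2 t)));
  last by move=> t _; rewrite cost_term_succ.
by rewrite sum_f_R0_rsum; apply: rsum_ext => w; rewrite sum_f_R0_mulr IH.
Qed.

Lemma HasValue_iter s x v : HasValue p G Sterm pi s x v <->
  Un_cv (fun n => iter n.+1 (Td p G Sterm pi) (fun _ _ => 0) s x) v.
Proof. by split; apply: cv_ext => n; rewrite partial_cost_iter. Qed.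

Hypotheses (Hp : is_kernel p) (pipol : is_policy pi).

Lemma cost_term_ge0 t s0 x0 : 0 <= cost_term s0 x0 t.
Proof.
have [p0 _] := Hp; rewrite cost_termE; apply: rsum_ge0 => z.
apply: Rmult_le_pos; last exact: live_cost_ge0.
elim: t z => [|t IH] [s x] /=; first by case: (_ && _); lra.
apply: rsum_ge0 => s1; apply: rsum_ge0 => x1; case: (Sterm s1); first lra.
case: (_ == _); last lra.
apply: Rmult_le_pos; first exact: (IH (s1, x1)).
by apply: rsum_ge0 => a; apply: Rmult_le_pos => //; case: (pipol s1 x1).
Qed.

Lemma HasValue_le_supersolution V s0 x0 : (forall s x, 0 <= V s x) ->
  (forall s x, Td p G Sterm pi V s x <= V s x) ->
  exists v, HasValue p G Sterm pi s0 x0 v /\ v <= V s0 x0.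
Proof.
move=> V0 super.
have iter_le n s x : iter n (Td p G Sterm pi) (fun _ _ => 0) s x <= V s x.
  elim: n s x => [|n IH] s x; first exact: V0.
  by apply: Rle_trans (super s x); apply: Tloc_le => //; case: (pipol s x).
have growing : Un_growing (sum_f_R0 (cost_term s0 x0)).
  by move=> n; rewrite /=; have := cost_term_ge0 n.+1 s0 x0; lra.
have bounded : has_ub (sum_f_R0 (cost_term s0 x0)).
  by exists (V s0 x0) => _ [n ->]; rewrite partial_cost_iter; apply: iter_le.
have [v cvv] := growing_cv _ growing bounded.
exists v; split=> //; apply: Rle_cv_lim cvv (cv_const _) => n.
by rewrite partial_cost_iter; apply: iter_le.
Qed.

Lemma HasValue_fixed_point V : standing_assumption p G Sterm ->
  (forall s x, Td p G Sterm pi V s x = V s x) -> forall s x, HasValue p G Sterm pi s x (V s x).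
Proof.
move=> standing fixV s x; apply/HasValue_iter/cv_of_dist_cv0.
have dom : dominated p G Sterm
    (fun n s x => Rabs (iter n.+1 (Td p G Sterm pi) (fun _ _ => 0) s x - V s x)).
  split=> [n s' x' | n s' x']; first exact: Rabs_pos.
  exists (pi s' x') => //; rewrite iterS -{1}fixV /Td Tloc_sub.
  exact (Ploc_abs G Sterm Hp _ s' x' (proj1 (pipol s' x'))).
exact (dominated_cv0 Hp standing dom s x).
Qed.

End PolicyEvaluation.

Theorem proposition2
  (S A : finType) (p : S -> A -> S -> R) (G Sterm : pred S)
  (Hp : is_kernel p)
  (Hstand : standing_assumption p G Sterm)
  (alpha : R) (Halpha : 0 < alpha < 1) (S0 : pred S)
  (L : S -> bool -> R) (pi_s : S -> bool -> A -> R)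
  (Hpis : is_policy pi_s)
  (HL : is_lyapunov p G Sterm alpha S0 pi_s L) :
  (forall V : S -> bool -> R, exists W, IsTexp p G Sterm L V W) /\
  (exists Vexp : S -> bool -> R,
     (forall V', IsTexp p G Sterm L V' V' <-> V' = Vexp) /\
     (forall Vs : nat -> S -> bool -> R,
        (forall k, IsTexp p G Sterm L (Vs k) (Vs k.+1)) ->
        forall s x, Un_cv (fun k => Vs k s x) (Vexp s x)) /\
     (forall pi_e : S -> bool -> A -> R,
        is_policy pi_e ->
        (forall s x, Td p G Sterm pi_e L s x <= L s x /\
                     Td p G Sterm pi_e Vexp s x = Vexp s x) ->
        (forall s x, HasValue p G Sterm pi_e s x (Vexp s x)) /\
        (forall s0 (pi : S -> bool -> A -> R),
           is_policy pi ->
           (forall s x, Td p G Sterm pi L s x <= L s x) ->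
           exists v, HasValue p G Sterm pi s0 true v /\ v <= Vexp s0 true))).
Proof.
have [_ [Hfeas _]] := HL.
split; first exact: Texp_exists Hpis Hfeas.
have [Vexp Tfix Vexp0] := Texp_fixed_exists Hp Hpis Hfeas Hstand.
exists Vexp; split.
  by move=> V; split=> [TV | ->] //; exact (Texp_fixed_unique Hp Hstand TV Tfix).
split; first by move=> Vs TVs; exact (value_iteration_cv Hp Hstand Tfix TVs).
move=> pi_e pi_e_pol pi_e_opt; split.
  by apply: HasValue_fixed_point Hp pi_e_pol _ Hstand _ => s x; case: (pi_e_opt s x).
move=> s0 pi pipol pifeas.
have super s x : Td p G Sterm pi Vexp s x <= Vexp s x := proj2 (Tfix s x) _ (pipol s x) (pifeas s x).
exact (HasValue_le_supersolution Hp pipol s0 true Vexp0 super).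
Qed.
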